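(* Let $\Omega\subset\mathbb{R}^n$ be a smoothly bounded domain, $0<\beta<1$ and $s\in\mathbb{R}\setminus\{0\}$. Assume $u\in C^{1,\beta}(\overline{\Omega})$ satisfies $\inf_{x\in\overline{\Omega}}|\nabla u(x)|\geq\lambda_1$ for some $\lambda_1>0$. Let, for $0<t<1$, $k_t=\min\{k\in\mathbb{N}: k\geq|\log t|/\log 2\}$. Then: (i) if $s\geq 1$, $\||\nabla u|^s\|_{C^{0,\beta}}\leq\|\nabla u\|_{L^\infty}^s+2s\|\nabla u\|_{C^{0,\beta}}^s$; (ii) if $0<s<1$, $\||\nabla u|^s\|_{C^{0,\beta}}\leq\|\nabla u\|_{L^\infty}^s+\frac{2s}{\prod_{j=1}^{k_s}\lambda_1^{2^{j-1}s}}\|\nabla u\|_{C^{0,\beta}}^{2^{k_s}s}$; (iii) if $-1<s<0$, $\||\nabla u|^s\|_{C^{0,\beta}}\leq\lambda_1^s+\frac{2|s|}{\lambda_1^{2|s|}\prod_{j=1}^{k_{|s|}}\lambda_1^{2^{j-1}|s|}}\|\nabla u\|_{C^{0,\beta}}^{2^{k_{|s|}}|s|}$; (iv) if $s\leq -1$, $\||\nabla u|^s\|_{C^{0,\beta}}\leq\lambda_1^s+2|s|\lambda_1^{2s}\|\nabla u\|_{C^{0,\beta}}^{|s|}$.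
   Context: All norms are over $\Omega$; $|\cdot|$ is the Euclidean norm on $\mathbb{R}^n$. For a (scalar or vector valued) function $w$, $\|w\|_{C^{0,\beta}}=\|w\|_{L^\infty}+\sup_{x\neq y}\frac{|w(x)-w(y)|}{|x-y|^\beta}$. *)

From HB Require Import structures.
From mathcomp Require Import all_boot all_order all_algebra.
From mathcomp Require Import all_classical all_reals all_analysis.
Set Implicit Arguments. Unset Strict Implicit. Unset Printing Implicit Defensive.
Import Order.TTheory GRing.Theory Num.Theory.
Import numFieldNormedType.Exports.
Local Open Scope classical_set_scope.
Local Open Scope ring_scope.

Section Defs.
Context {R : realType} {n : nat}.

Definition eucl (v : 'rV[R]_n) : R := Num.sqrt (\sum_(i < n) v ord0 i ^+ 2).

Definition grad (u : 'rV[R]_n -> R) (x : 'rV[R]_n) : 'rV[R]_n :=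
  \row_(i < n) ('D_(delta_mx ord0 i) u x : R).

Fixpoint iterD (vs : seq 'rV[R]_n) (f : 'rV[R]_n -> R) : 'rV[R]_n -> R :=
  match vs with
  | [::] => f
  | v :: vs' => 'D_v (iterD vs' f)
  end.

Definition smooth (f : 'rV[R]_n -> R) :=
  forall (vs : seq 'rV[R]_n) (x : 'rV[R]_n), differentiable (iterD vs f) x.

Definition smooth_bounded_domain (Om : set 'rV[R]_n) :=
  [/\ Om !=set0, open Om, connected Om, bounded_set Om &
    exists rho : 'rV[R]_n -> R, [/\ smooth rho,
       Om = [set x | rho x < 0] &
       forall x, rho x = 0 -> grad rho x != 0]].

Definition linf_vec (Om : set 'rV[R]_n) (w : 'rV[R]_n -> 'rV[R]_n) : \bar R :=
  ereal_sup [set (eucl (w x))%:E | x in Om].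
Definition linf_scal (Om : set 'rV[R]_n) (f : 'rV[R]_n -> R) : \bar R :=
  ereal_sup [set (`|f x|)%:E | x in Om].

Definition hsemi_vec (Om : set 'rV[R]_n) (be : R) (w : 'rV[R]_n -> 'rV[R]_n) : \bar R :=
  ereal_sup [set r | exists x y, [/\ Om x, Om y, x <> y &
                       r = (eucl (w x - w y) / (eucl (x - y)) `^ be)%:E]].
Definition hsemi_scal (Om : set 'rV[R]_n) (be : R) (f : 'rV[R]_n -> R) : \bar R :=
  ereal_sup [set r | exists x y, [/\ Om x, Om y, x <> y &
                       r = (`|f x - f y| / (eucl (x - y)) `^ be)%:E]].

Definition holder_vec Om be w : \bar R := (linf_vec Om w + hsemi_vec Om be w)%E.
Definition holder_scal Om be f : \bar R := (linf_scal Om f + hsemi_scal Om be f)%E.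

(* u in C^{1,beta}(closure Omega): u differentiable in Omega, u bounded,
   grad u with finite C^{0,beta} norm on Omega *)
Definition C1beta (Om : set 'rV[R]_n) (be : R) (u : 'rV[R]_n -> R) :=
  [/\ forall x, Om x -> differentiable u x,
      (linf_scal Om u < +oo)%E &
      (holder_vec Om be (grad u) < +oo)%E].

End Defs.

Lemma exists_nat_ge {R : realType} (x : R) : exists k : nat, x <= k%:R.
Proof.
exists (Num.truncn `|x|).+1.
apply: (le_trans (ler_norm x)).
by apply/ltW; rewrite (@Num.Theory.truncnS_gt R `|x|)%R.
Qed.

Definition kt {R : realType} (t : R) : nat :=
  ex_minn (exists_nat_ge (`|ln t| / ln 2)).

From HB Require Import structures.
From mathcomp Require Import all_boot all_order all_algebra.
From mathcomp Require Import all_classical all_reals all_analysis.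
From mathcomp Require Import ring lra.
Import Order.TTheory GRing.Theory Num.Theory.
Import numFieldNormedType.Exports.
Local Open Scope classical_set_scope.
Local Open Scope ring_scope.

(* On Omega the gradient takes values in [lam1, L], L = ||grad u||_oo, so by the mean
   value theorem t |-> t^s is Lipschitz there with constant |s| max(lam1^(s-1), L^(s-1));
   with the reverse triangle inequality this bounds the Hoelder seminorm of |grad u|^s
   by that constant times h = [grad u]_beta, and its sup by max(lam1^s, L^s).
   Since lam, h <= M = L + h, one has lam^(s-1) h <= lam^(s-p) M^p for every p >= 1.
   The four cases take (lam, p) = (L, s), (lam1, 2^k_s s), (lam1, 2^k_|s| |s|) and
   (lam1, |s|): the definition of k_t gives 2^k_t t >= 1, and the lam1-factors of the
   statement multiply out to lam1^(s-p). *)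

Lemma cauchy_schwarz_sum (R : realDomainType) (I : finType) (a b : I -> R) :
  (\sum_i a i * b i) ^+ 2 <= (\sum_i a i ^+ 2) * (\sum_i b i ^+ 2).
Proof.
have lagrange : \sum_i \sum_j (a i * b j - a j * b i) ^+ 2 =
    2 * ((\sum_i a i ^+ 2) * (\sum_i b i ^+ 2) - (\sum_i a i * b i) ^+ 2).
  have expand i j : (a i * b j - a j * b i) ^+ 2 =
      a i ^+ 2 * b j ^+ 2 + b i ^+ 2 * a j ^+ 2 - 2 * (a i * b i * (a j * b j)).
    by ring.
  under eq_bigr do under eq_bigr do rewrite expand.
  under eq_bigr do rewrite sumrB big_split /=.
  rewrite sumrB big_split /=.
  have -> : \sum_i \sum_j 2 * (a i * b i * (a j * b j)) =
      2 * \sum_i \sum_j a i * b i * (a j * b j).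
    by rewrite mulr_sumr; apply: eq_bigr => i _; rewrite mulr_sumr.
  have -> : \sum_i \sum_j b i ^+ 2 * a j ^+ 2 = \sum_i \sum_j a i ^+ 2 * b j ^+ 2.
    by rewrite exchange_big; apply: eq_bigr => i _; apply: eq_bigr => j _; rewrite mulrC.
  rewrite expr2 !big_distrlr /=; ring.
have : 0 <= \sum_i \sum_j (a i * b j - a j * b i) ^+ 2.
  by apply: sumr_ge0 => i _; apply: sumr_ge0 => j _; exact: sqr_ge0.
by rewrite lagrange pmulr_rge0 // subr_ge0.
Qed.

Section Euclid.
Context {R : realType} {n : nat}.
Implicit Types a b : 'rV[R]_n.

Lemma eucl_ge0 a : 0 <= eucl a.
Proof. exact: sqrtr_ge0. Qed.

Lemma eucl0 : eucl (0 : 'rV[R]_n) = 0.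
Proof. by rewrite /eucl big1 ?sqrtr0 // => i _; rewrite mxE expr0n. Qed.

Lemma euclN a : eucl (- a) = eucl a.
Proof. by congr Num.sqrt; apply: eq_bigr => i _; rewrite mxE sqrrN. Qed.

Lemma euclD a b : eucl (a + b) <= eucl a + eucl b.
Proof.
rewrite /eucl; set A := \sum_i a ord0 i ^+ 2; set B := \sum_i b ord0 i ^+ 2.
have A0 : 0 <= A by apply: sumr_ge0 => i _; exact: sqr_ge0.
have B0 : 0 <= B by apply: sumr_ge0 => i _; exact: sqr_ge0.
have -> : \sum_i (a + b) ord0 i ^+ 2 = A + B + 2 * \sum_i a ord0 i * b ord0 i.
  rewrite mulr_sumr -!big_split /=; apply: eq_bigr => i _; rewrite mxE; ring.
have cs : \sum_i a ord0 i * b ord0 i <= Num.sqrt A * Num.sqrt B.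
  rewrite -sqrtrM // (le_trans (ler_norm _)) // -sqrtr_sqr ler_sqrt ?mulr_ge0 //.
  exact: cauchy_schwarz_sum.
rewrite -[_ + Num.sqrt B]ger0_norm ?addr_ge0 ?sqrtr_ge0 // -sqrtr_sqr ler_sqrt ?sqr_ge0 //.
by rewrite sqrrD !sqr_sqrtr //; lra.
Qed.

Lemma ler_eucl_dist a b : `|eucl a - eucl b| <= eucl (a - b).
Proof.
have le_sub (x y : 'rV[R]_n) : eucl x - eucl y <= eucl (x - y).
  by rewrite lerBlDr; have := euclD (x - y) y; rewrite subrK.
by rewrite ler_norml le_sub andbT lerNl opprB -[a - b]opprB euclN le_sub.
Qed.

End Euclid.

Section Powers.
Context {R : realType}.
Implicit Types lam M L K a b c h p r s t x y : R.

Lemma le0_ger_powR r x y : r <= 0 -> 0 < x -> x <= y -> y `^ r <= x `^ r.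
Proof.
move=> r0 x0 xy; have y0 : 0 < y by lra.
rewrite -[r]opprK !(powRN _ (- r)) lef_pV2 ?posrE ?powR_gt0 //.
by apply: ge0_ler_powR; rewrite ?nnegrE; lra.
Qed.

Lemma max_powR_r r lam l : 0 <= r -> 0 < lam <= l ->
  Num.max (lam `^ r) (l `^ r) = l `^ r.
Proof.
by move=> r0 /andP[lam0 laml]; apply: max_r; apply: ge0_ler_powR; rewrite ?nnegrE; lra.
Qed.

Lemma max_powR_l r lam l : r <= 0 -> 0 < lam <= l ->
  Num.max (lam `^ r) (l `^ r) = lam `^ r.
Proof. by move=> r0 /andP[lam0 laml]; apply: max_l; apply: le0_ger_powR. Qed.

Lemma powR_le_max r lam l c : 0 < lam <= c -> c <= l ->
  c `^ r <= Num.max (lam `^ r) (l `^ r).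
Proof.
move=> /andP[lam0 lamc] cl; have laml : 0 < lam <= l by rewrite lam0; lra.
have [r0|r0] := leP 0 r.
  by rewrite max_powR_r //; apply: ge0_ler_powR; rewrite ?nnegrE; lra.
by rewrite max_powR_l ?(ltW r0) //; exact: le0_ger_powR (ltW r0) lam0 lamc.
Qed.

Lemma powR_lipschitz s lam L K a b : 0 < lam ->
    (forall c, lam <= c <= L -> c `^ (s - 1) <= K) ->
    lam <= a <= L -> lam <= b <= L ->
  `|a `^ s - b `^ s| <= `|s| * K * `|a - b|.
Proof.
move=> lam0 boundK; wlog ba : a b / b < a => [wlog ha hb|].
  have [ab|ba|<-] := ltgtP a b; last by rewrite !subrr normr0 mulr0.
  - by rewrite distrC [`|a - b|]distrC; apply: wlog.
  - exact: wlog.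
move=> /andP[_ aL] /andP[lamb _].
have b0 : 0 < b by lra.
have cont : {within `[b, a], continuous (fun x : R => x `^ s)}.
  apply: derivable_within_continuous => x; rewrite in_itv /= => /andP[bx _].
  by apply: derivable_powR; rewrite in_itv /= andbT; lra.
have der x : x \in `]b, a[ -> is_derive x 1 (fun y : R => y `^ s) (s * x `^ (s - 1)).
  by rewrite in_itv /= => /andP[bx _]; apply: is_derive1_powR; lra.
have [c] := MVT ba der cont; rewrite in_itv /= => /andP[bc ca] ->.
rewrite !normrM ler_wpM2r // ler_wpM2l // ger0_norm ?powR_ge0 //.
by apply: boundK; lra.
Qed.

Lemma powR_mul_le s p lam M h : 0 < lam <= M -> 0 <= h <= M -> 1 <= p ->
  `|s| * lam `^ (s - 1) * h <= 2 * `|s| * (lam `^ (s - p) * M `^ p).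
Proof.
move=> /andP[lam0 lamM] /andP[h0 hM] p1.
have lam_split : lam `^ (s - 1) = lam `^ (s - p) * lam `^ (p - 1).
  by rewrite -powRD ?(gt_eqF lam0) ?implybT //; congr (_ `^ _); ring.
have key : lam `^ (p - 1) * h <= M `^ p.
  rewrite -(@mulr_powRB1 _ M) 1?[M * _]mulrC; [|lra|lra].
  by apply: ler_pM; rewrite ?powR_ge0 //; apply: ge0_ler_powR; rewrite ?nnegrE; lra.
have rhs0 : 0 <= `|s| * (lam `^ (s - p) * M `^ p) by rewrite !mulr_ge0 ?powR_ge0.
apply: (le_trans (_ : _ <= `|s| * (lam `^ (s - p) * M `^ p))); last lra.
by rewrite lam_split -!mulrA ler_wpM2l // ler_wpM2l ?powR_ge0.
Qed.

Lemma prod_powR_doubling lam t k : 0 < lam ->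
  \prod_(1 <= j < k.+1) lam `^ ((2 ^ j.-1)%:R * t) = lam `^ ((2 ^ k)%:R * t - t).
Proof.
move=> lam0; elim: k => [|k IH]; first by rewrite big_geq // mul1r subrr powRr0.
rewrite big_nat_recr //= IH -powRD ?(gt_eqF lam0) ?implybT //.
by congr (_ `^ _); rewrite expnS natrM; ring.
Qed.
End Powers.

Lemma expn_kt_mul_ge1 {R : realType} (t : R) : 0 < t < 1 -> 1 <= (2 ^ kt t)%:R * t.
Proof.
move=> /andP[t0 t1]; rewrite /kt; case: ex_minnP => k + _.
have ln2 : 0 < ln (2 : R) by apply: ln_gt0; lra.
rewrite ler_pdivrMr // ltr0_norm ?ln_lt0 ?t0 // -lnV ?posrE //.
rewrite mulrC mulr_natr -lnXn; last lra.
by rewrite ler_ln ?posrE ?invr_gt0 ?exprn_gt0 // natrX -ler_pdivrMr // div1r.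
Qed.

Lemma open_exists_neq {R : realType} {V : normedModType R} {A : set V} {x d : V} :
  open A -> A x -> d != 0 -> exists2 y, A y & x <> y.
Proof.
move=> oA Ax d0; have /nbhs_ballP[e /= e0 Ae] : nbhs x A by apply: open_nbhs_nbhs.
have nd0 : 0 < `|d| by rewrite normr_gt0.
set t := e / (2 * `|d|); have t0 : 0 < t by rewrite divr_gt0 ?mulr_gt0.
exists (x + t *: d).
  apply: Ae; rewrite -ball_normE /= opprD addrA subrr sub0r normrN normrZ gtr0_norm //.
  have -> : t * `|d| = e / 2 by rewrite /t; field; rewrite gt_eqF.
  lra.
move=> /eqP; rewrite -subr_eq0 opprD addrA subrr sub0r oppr_eq0 scaler_eq0.
by rewrite (negPf d0) orbF gt_eqF.
Qed.

Section HolderNorms.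
Context {R : realType} {n : nat}.
Context {Om : set 'rV[R]_n} {be : R} {w : 'rV[R]_n -> 'rV[R]_n}.

Lemma holder_vec_finite x y : Om x -> Om y -> x <> y ->
    (holder_vec Om be w < +oo)%E ->
  exists l h, [/\ linf_vec Om w = l%:E, hsemi_vec Om be w = h%:E & 0 <= h].
Proof.
move=> Ox Oy xy; rewrite /holder_vec.
have q0 : 0 <= eucl (w x - w y) / eucl (x - y) `^ be.
  by rewrite divr_ge0 ?eucl_ge0 ?powR_ge0.
have : ((eucl (w x))%:E <= linf_vec Om w)%E by apply: ereal_sup_ubound; exists x.
have : ((eucl (w x - w y) / eucl (x - y) `^ be)%:E <= hsemi_vec Om be w)%E.
  by apply: ereal_sup_ubound; exists x, y.
case: (hsemi_vec Om be w) => [h||] hge; case: (linf_vec Om w) => [l||] //= _ _.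
by exists l, h; split=> //; rewrite -lee_fin (le_trans _ hge) ?lee_fin.
Qed.

Lemma holder_scal_le (f : 'rV[R]_n -> R) (S K h : R) : 0 <= K ->
    (forall x, Om x -> `|f x| <= S) ->
    (forall x y, Om x -> Om y -> `|f x - f y| <= K * eucl (w x - w y)) ->
    (hsemi_vec Om be w <= h%:E)%E ->
  (holder_scal Om be f <= (S + K * h)%:E)%E.
Proof.
move=> K0 fS fK wh; rewrite /holder_scal EFinD leeD //.
  by apply: ge_ereal_sup => _ [x Ox <-]; rewrite lee_fin fS.
apply: ge_ereal_sup => _ [x [y [Ox Oy xy ->]]]; rewrite lee_fin.
have qh : eucl (w x - w y) / eucl (x - y) `^ be <= h.
  by rewrite -lee_fin (le_trans _ wh) //; apply: ereal_sup_ubound; exists x, y.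
apply: le_trans (ler_wpM2l K0 qh); rewrite mulrA.
by rewrite ler_wpM2r ?invr_ge0 ?powR_ge0 ?fK.
Qed.

Lemma holder_scal_powR_le (s lam l h : R) : 0 < lam ->
    (forall x, Om x -> lam <= eucl (w x) <= l) -> (hsemi_vec Om be w <= h%:E)%E ->
  (holder_scal Om be (fun x => eucl (w x) `^ s)%R <=
    (Num.max (lam `^ s) (l `^ s)
     + `|s| * Num.max (lam `^ (s - 1)) (l `^ (s - 1)) * h)%R%:E)%E.
Proof.
move=> lam0 wlam wh; apply: holder_scal_le => //.
- by rewrite mulr_ge0 // le_max powR_ge0.
- move=> x /wlam/andP[lx xl]; rewrite ger0_norm ?powR_ge0 //.
  by apply: powR_le_max; rewrite ?lam0.
- move=> x y /wlam wx /wlam wy; rewrite -mulrA.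
  set K := Num.max _ _.
  apply: le_trans (powR_lipschitz s lam l K _ _ lam0 _ wx wy) _ => [c /andP[lc cl]|].
    by apply: powR_le_max; rewrite ?lam0 ?lc.
  by rewrite -mulrA ler_wpM2l // ler_wpM2l ?le_max ?powR_ge0 // ler_eucl_dist.
Qed.

Lemma holder_vec_bounds lam : open Om -> Om !=set0 ->
    (holder_vec Om be w < +oo)%E -> 0 < lam ->
    (lam%:E <= ereal_inf [set (eucl (w x))%:E | x in Om])%E ->
  exists l h, [/\ linf_vec Om w = l%:E, hsemi_vec Om be w = h%:E, 0 <= h,
    lam <= l & forall x, Om x -> lam <= eucl (w x) <= l].
Proof.
move=> oOm [x0 Ox0] fin lam0 lam_inf.
have lam_le x : Om x -> lam <= eucl (w x).
  by move=> Ox; rewrite -lee_fin (le_trans lam_inf) //; apply: ereal_inf_lbound; exists x.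
have w0 : w x0 != 0 by apply: contraTneq (lam_le x0 Ox0) => ->; rewrite eucl0 -ltNge.
(* a second point is needed: on a singleton the supremum defining hsemi_vec is -oo *)
have [y0 Oy0 x0y0] := open_exists_neq oOm Ox0 w0.
have [l [h [linfE hsemiE h0]]] := holder_vec_finite _ _ Ox0 Oy0 x0y0 fin.
have w_in x : Om x -> lam <= eucl (w x) <= l.
  by move=> Ox; rewrite lam_le // -lee_fin -linfE; apply: ereal_sup_ubound; exists x.
by exists l, h; split=> //; have /andP[] := w_in x0 Ox0; apply: le_trans.
Qed.

End HolderNorms.

Theorem lemma4p1 (R : realType) (n : nat) (Om : set 'rV[R]_n)
    (be s lam1 : R) (u : 'rV[R]_n -> R) :
  smooth_bounded_domain Om -> 0 < be < 1 -> s != 0 ->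
  C1beta Om be u ->
  0 < lam1 ->
  (lam1%:E <= ereal_inf [set (eucl (grad u x))%:E | x in Om])%E ->
  let L := fine (linf_vec Om (grad u)) in
  let M := fine (holder_vec Om be (grad u)) in
  let N := holder_scal Om be (fun x => eucl (grad u x) `^ s) in
  [/\ 1 <= s ->
        (N <= (L `^ s + 2 * s * M `^ s)%:E)%E,
      0 < s < 1 ->
        (N <= (L `^ s + 2 * s
                 / (\prod_(1 <= j < (kt s).+1) lam1 `^ ((2 ^ j.-1)%:R * s))
                 * M `^ ((2 ^ kt s)%:R * s))%:E)%E,
      -1 < s < 0 ->
        (N <= (lam1 `^ s + 2 * `|s|
                 / (lam1 `^ (2 * `|s|)
                    * \prod_(1 <= j < (kt `|s|).+1) lam1 `^ ((2 ^ j.-1)%:R * `|s|))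
                 * M `^ ((2 ^ kt `|s|)%:R * `|s|))%:E)%E &
      s <= -1 ->
        (N <= (lam1 `^ s + 2 * `|s| * lam1 `^ (2 * s) * M `^ `|s|)%:E)%E].
Proof.
move=> [Om0 oOm _ _ _] _ _ [_ _ fin] lam0 lam_inf L M N.
have [l [h [linfE hsemiE h0 lam_l grad_in]]] := holder_vec_bounds _ oOm Om0 fin lam0 lam_inf.
have hsemi_le : (hsemi_vec Om be (grad u) <= h%:E)%E by rewrite hsemiE.
have N_le := holder_scal_powR_le s lam1 l h lam0 grad_in hsemi_le.
rewrite /L /M /holder_vec linfE hsemiE /=.
have lam_in : 0 < lam1 <= l by rewrite lam0.
have coef lam p : 0 < lam <= l -> 1 <= p ->
    `|s| * lam `^ (s - 1) * h <= 2 * `|s| * (lam `^ (s - p) * (l + h) `^ p).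
  by move=> /andP[lam0' laml] p1; apply: powR_mul_le; rewrite ?lam0' //=; lra.
split => hs; apply: le_trans N_le _; rewrite lee_fin.
- rewrite !max_powR_r ?lerD2l //; try lra.
  apply: le_trans (coef l s _ hs) _; first by rewrite lexx andbT; lra.
  by rewrite subrr powRr0 mul1r ger0_norm //; lra.
- have /andP[s0 s1] := hs.
  rewrite max_powR_r ?max_powR_l ?lerD2l //; try lra.
  rewrite prod_powR_doubling // -powRN opprB.
  apply: le_trans (coef lam1 _ _ (expn_kt_mul_ge1 _ hs)) _ => //.
  by rewrite gtr0_norm // mulrA.
- have /andP[s1 s0] := hs.
  have abs_s : 0 < `|s| < 1 by rewrite ltr0_norm //; lra.
  rewrite !max_powR_l ?lerD2l //; try lra.
  set p := (2 ^ kt `|s|)%:R * `|s|.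
  rewrite prod_powR_doubling // -powRD ?(gt_eqF lam0) ?implybT // -powRN.
  have -> : - (2 * `|s| + (p - `|s|)) = s - p by rewrite ltr0_norm //; ring.
  apply: le_trans (coef lam1 _ _ (expn_kt_mul_ge1 _ abs_s)) _ => //.
  by rewrite mulrA.
- rewrite !max_powR_l ?lerD2l //; try lra.
  have -> : 2 * s = s - `|s| by rewrite ler0_norm //; [ring | lra].
  apply: le_trans (coef lam1 `|s| _ _) _ => //; last by rewrite mulrA.
  by rewrite ler0_norm //; lra.
Qed.
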